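(* Let $(\mathcal{X},d)$ be a finite metric space, $\mathcal{P}=\{P_1,\dots,P_t\}$ a partition of $\mathcal{X}$, and $b\ge 0$ an integer. For each $i\in[t]$, run the greedy (farthest-first) $k$-center procedure on $P_i$ with $k=b+1$, producing an ordered list of centers, and for $j\in[b+1]$ let $R_{i,j}$ be the first $j$ centers and $\hat c_i(j)=\mathrm{cost}(P_i,R_{i,j})$. Let $(\hat b_1,\dots,\hat b_t)$ be an optimal solution of $$\min \sum_{i=1}^t \hat c_i(b_i+1)\quad\text{subject to}\quad \sum_{i=1}^t b_i=b,\ b_i\in\{0,1,2,\dots\}\ \forall i\in[t],$$ and let $R_i=R_{i,\hat b_i+1}$ be the first $\hat b_i+1$ greedy centers of $P_i$. Then $\{R_i:i\in[t]\}$ is a feasible solution of the \textsc{BestReps} problem with objective value at most $2$ times the optimal value of \textsc{BestReps}.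
   Context: For $x\in P$ and $R\subseteq P$ nonempty, $\mathrm{cost}(P,R)=\max_{x\in P}\min_{r\in R}d(x,r)$. The \textsc{BestReps} problem with budget $b$: choose sets $R_i\subseteq P_i$, $i\in[t]$, minimizing $\sum_{i=1}^t\mathrm{cost}(P_i,R_i)$ subject to $|R_i|\ge1$ for all $i$ and $\sum_{i=1}^t(|R_i|-1)\le b$. The greedy $k$-center procedure on a set $P$: choose an arbitrary first center; at each subsequent step $j\le k$, choose as the $j$th center a point of $P$ at maximum distance from the set of the first $j-1$ centers (ties broken arbitrarily). (If $P$ has fewer than $j$ points, the first $j$ centers are understood to be all of $P$.) *)

From mathcomp Require Import all_boot all_order all_algebra.
From mathcomp Require Import reals.

Set Implicit Arguments.
Unset Strict Implicit.
Unset Printing Implicit Defensive.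

Import Order.TTheory GRing.Theory Num.Theory.
Local Open Scope ring_scope.

Section Defs.
Variables (R : realType) (T : finType) (d : T -> T -> R).

Definition is_metric : Prop :=
  [/\ forall x y, d x y = 0 <-> x = y,
      forall x y, d x y = d y x &
      forall x y z, d x z <= d x y + d y z].

(* min_{r in S} d(x, r); meaningful for nonempty S (the neutral element
   d x (head x (enum S)) is an element of the family when S is nonempty). *)
Definition mind (x : T) (S : {set T}) : R :=
  \big[Num.min/d x (head x (enum S))]_(r in S) d x r.

(* cost(P, S) = max_{x in P} min_{r in S} d(x, r)  (distances are >= 0,
   so 0 is a correct neutral element for the max). *)
Definition cost (P S : {set T}) : R :=
  \big[Num.max/0]_(x in P) mind x S.

(* c is a possible output (ordered list of centers) of the greedy
   farthest-first k-center procedure on P, with arbitrary tie breaking: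
   its length is min(k, |P|), its centers are distinct points of P, and
   each center after the first is at maximum distance from the previous
   centers among all points of P. *)
Definition greedy_run (P : {set T}) (k : nat) (c : seq T) : Prop :=
  [/\ size c = minn k #|P|, uniq c, all (mem P) c &
      forall j x0, (0 < j < size c)%N -> forall y, y \in P ->
        mind y [set z in take j c] <= mind (nth x0 c j) [set z in take j c]].

Definition prefix_set (c : seq T) (j : nat) : {set T} := [set z in take j c].

Definition bestreps_feasible (t : nat) (P : 'I_t -> {set T}) (b : nat)
  (Q : 'I_t -> {set T}) : Prop :=
  [/\ forall i, Q i \subset P i, forall i, (1 <= #|Q i|)%N &
      (\sum_(i < t) (#|Q i| - 1) <= b)%N].

Definition bestreps_obj (t : nat) (P Q : 'I_t -> {set T}) : R :=
  \sum_(i < t) cost (P i) (Q i).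

End Defs.

From mathcomp Require Import all_boot all_order all_algebra.
From mathcomp Require Import reals.
From mathcomp Require Import zify lra.
Set Implicit Arguments.
Unset Strict Implicit.
Unset Printing Implicit Defensive.

Import Order.TTheory GRing.Theory Num.Theory.
Local Open Scope ring_scope.

(* Greedy is a 2-approximation for every number of centers: if some point y of
   P were at distance > 2 cost(P, Q) from the first j = |Q| greedy centers,
   then y together with these centers would be j + 1 points at pairwise
   distance > 2 cost(P, Q) (the greedy choice makes later centers at least as
   far from earlier ones as y is), and no two of them can share their nearest
   point of Q, a contradiction.  Hence the greedy prefixes with |Q_i| - 1 extra
   centers cost at most 2 cost(P_i, Q_i) each; padding the budget allocation
   of any feasible (Q_i) up to b gives an allocation that the optimal bhat
   beats. *)

Section Prefixes.
Variable T : finType.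

Lemma prefix_set_subset (c : seq T) i j :
  (i <= j)%N -> prefix_set c i \subset prefix_set c j.
Proof.
by move=> le_ij; apply/subsetP => z; rewrite !inE -(take_takel c le_ij) => /mem_take.
Qed.

Lemma nth_prefix_set x0 (c : seq T) a j :
  (a < j)%N -> (a < size c)%N -> nth x0 c a \in prefix_set c j.
Proof.
by move=> lt_aj lt_ac; rewrite inE -(nth_take x0 lt_aj) mem_nth // size_take_min leq_min lt_aj.
Qed.

Lemma card_prefix_set (c : seq T) j :
  uniq c -> #|prefix_set c j| = minn j (size c).
Proof.
by move=> uniq_c; rewrite cardsE (card_uniqP (take_uniq j uniq_c)) size_take_min.
Qed.

End Prefixes.

Section Metric.
Variables (R : realType) (T : finType) (d : T -> T -> R).
Hypothesis metric_d : is_metric d.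

Lemma metric_dxx x : d x x = 0.
Proof. by case: metric_d => dP _ _; apply/dP. Qed.

Lemma metric_sym x y : d x y = d y x.
Proof. by case: metric_d. Qed.

Lemma metric_triangle x y z : d x z <= d x y + d y z.
Proof. by case: metric_d. Qed.

Lemma metric_ge0 x y : 0 <= d x y.
Proof. by have := metric_triangle x y x; rewrite metric_dxx (metric_sym y x); lra. Qed.

Lemma mind_le x (S : {set T}) r : r \in S -> mind d x S <= d x r.
Proof. by move=> rS; rewrite /mind (bigD1 r) //= ge_min lexx. Qed.

Lemma mind_attained x (S : {set T}) :
  S != set0 -> exists2 r, r \in S & mind d x S = d x r.
Proof.
move=> /set0Pn [z zS]; rewrite /mind.
apply: (big_ind (fun v => exists2 r, r \in S & v = d x r)).
- exists (head x (enum S)) => //.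
  have: z \in enum S by rewrite mem_enum.
  by case: (enum S) (mem_enum S) => // r s memS _ /=; rewrite -memS mem_head.
- by move=> _ _ [r1 ? ->] [r2 ? ->]; rewrite minEle; case: ifP; [exists r1 | exists r2].
- by move=> r rS; exists r.
Qed.

Lemma mind_ge0 x (S : {set T}) : 0 <= mind d x S.
Proof.
rewrite /mind; apply: (big_ind (fun v => 0 <= v)) => [|u v u0 v0|r _].
- exact: metric_ge0.
- by rewrite le_min u0.
- exact: metric_ge0.
Qed.

Lemma mind_antitone x (S1 S2 : {set T}) :
  S1 != set0 -> S1 \subset S2 -> mind d x S2 <= mind d x S1.
Proof. by move=> /(mind_attained x) [r rS ->] /subsetP/(_ r rS); apply: mind_le. Qed.

Lemma mind_le_cost (P S : {set T}) x : x \in P -> mind d x S <= cost d P S.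
Proof. by move=> xP; rewrite /cost (bigD1 x) //= le_max lexx. Qed.

Lemma cost_le (P S : {set T}) v :
  0 <= v -> {in P, forall x, mind d x S <= v} -> cost d P S <= v.
Proof.
move=> v0 le_v; rewrite /cost; apply: (big_ind (fun u => u <= v)) => //.
by move=> u w uv wv; rewrite ge_max uv.
Qed.

Lemma cost_ge0 (P S : {set T}) : 0 <= cost d P S.
Proof.
rewrite /cost; apply: (big_ind (fun v => 0 <= v)) => // [u v u0 _|x _].
- by rewrite le_max u0.
- exact: mind_ge0.
Qed.

Lemma cost_antitone (P S1 S2 : {set T}) :
  S1 != set0 -> S1 \subset S2 -> cost d P S2 <= cost d P S1.
Proof.
move=> S1_ne sub12; apply: cost_le => [|x xP]; first exact: cost_ge0.
exact: le_trans (mind_antitone x S1_ne sub12) (mind_le_cost S1 xP).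
Qed.

(* Sending each point of A to a nearest point of Q is injective on A. *)
Lemma card_separated_le (A Q : {set T}) r :
  Q != set0 -> {in A, forall p, mind d p Q <= r} ->
  {in A &, forall p1 p2, p1 != p2 -> 2 * r < d p1 p2} -> (#|A| <= #|Q|)%N.
Proof.
move=> Q_ne near_Q sepA.
have nearest p : {q | q \in Q & mind d p Q = d p q}.
  by apply: sig2_eqW; apply: mind_attained.
pose f p := s2val (nearest p).
have f_near p : mind d p Q = d p (f p) by rewrite /f; case: (nearest p).
have f_inj : {in A &, injective f}.
  move=> p1 p2 p1A p2A f12; apply/eqP/negPn/negP => ne12.
  have := sepA _ _ p1A p2A ne12; rewrite ltNge => /negP; apply.
  have := metric_triangle p1 (f p1) p2.
  rewrite -f_near f12 (metric_sym (f p2)) -f_near.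
  by have := near_Q _ p1A; have := near_Q _ p2A; lra.
rewrite -(card_in_imset f_inj); apply/subset_leq_card/subsetP => _ /imsetP [p _ ->].
exact: (s2valP (nearest p)).
Qed.

Section Greedy.
Variables (P : {set T}) (k : nat) (c : seq T).
Hypothesis greedy_c : greedy_run d P k c.

Lemma greedy_prefix_subset j : prefix_set c j \subset P.
Proof.
case: greedy_c => _ _ /allP c_in_P _.
by apply/subsetP => z; rewrite inE => /mem_take /c_in_P.
Qed.

Lemma greedy_step_le y x0 a j : y \in P -> (a < j < size c)%N ->
  mind d y (prefix_set c j) <= d (nth x0 c j) (nth x0 c a).
Proof.
case: greedy_c => _ _ _ farthest yP /andP [lt_aj lt_jc].
have ca_in : nth x0 c a \in prefix_set c j by apply: nth_prefix_set; lia.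
apply: le_trans (farthest j x0 _ y yP) (mind_le _ ca_in); lia.
Qed.

Lemma greedy_separation y j p1 p2 : y \in P -> (j <= size c)%N ->
  p1 \in prefix_set c j -> p2 \in prefix_set c j -> p1 != p2 ->
  mind d y (prefix_set c j) <= d p1 p2.
Proof.
move=> yP le_jc.
wlog lt12 : p1 p2 / (index p1 c < index p2 c)%N.
  move=> wlog_lt p1S p2S ne12; have [lt12|lt21|eq12] := ltngtP (index p1 c) (index p2 c).
  - exact: wlog_lt.
  - by rewrite metric_sym; apply: wlog_lt; rewrite // eq_sym.
  - move: p1S p2S ne12; rewrite !inE => /mem_take p1c /mem_take p2c.
    by rewrite -(nth_index p1 p1c) -(nth_index p1 p2c) eq12 eqxx.
rewrite !inE => p1S p2S _; have p1c := mem_take p1S; have p2c := mem_take p2S.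
set j2 := index p2 c; have lt_j2j : (j2 < j)%N := index_ltn p2S.
have p1_in : p1 \in prefix_set c j2.
  by rewrite -(nth_index p1 p1c); apply: nth_prefix_set; rewrite // index_mem.
have S2_ne : prefix_set c j2 != set0 by apply/set0Pn; exists p1.
apply: le_trans (mind_antitone y S2_ne (prefix_set_subset c (ltnW lt_j2j))) _.
rewrite metric_sym -(nth_index p1 p1c) -(nth_index p1 p2c) -/j2.
by apply: greedy_step_le => //; rewrite lt12 index_mem.
Qed.

Lemma greedy_cost_le2 (Q : {set T}) m :
  Q \subset P -> (0 < #|Q| <= k)%N -> (#|Q| <= m)%N ->
  cost d P (prefix_set c m) <= 2 * cost d P Q.
Proof.
move=> QP /andP [Q_gt0 Q_lek] Q_lem; set j := #|Q| in Q_gt0 Q_lek Q_lem *.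
have [size_c uniq_c _ _] := greedy_c.
have le_jc : (j <= size c)%N by rewrite size_c leq_min Q_lek subset_leq_card.
set S := prefix_set c j.
have Q_ne : Q != set0 by rewrite -card_gt0.
have S_ne : S != set0.
  have [q _] : exists q, q \in Q by apply/set0Pn.
  by apply/set0Pn; exists (nth q c 0); apply: nth_prefix_set; lia.
apply: le_trans (cost_antitone P S_ne (prefix_set_subset c Q_lem)) _.
apply: cost_le => [|y yP]; first by have := cost_ge0 P Q; lra.
rewrite leNgt; apply/negP => far_y.
have y_notin_S : y \notin S.
  apply/negP => yS; have := mind_le y yS; have := cost_ge0 P Q.
  by rewrite metric_dxx; lra.
have sep : {in y |: S &, forall p1 p2, p1 != p2 -> 2 * cost d P Q < d p1 p2}.
  move=> p1 p2; rewrite !in_setU1 => /predU1P [-> | p1S] /predU1P [-> | p2S] ne12.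
  - by rewrite eqxx in ne12.
  - exact: lt_le_trans far_y (mind_le _ p2S).
  - by rewrite metric_sym; apply: lt_le_trans far_y (mind_le _ p1S).
  - exact: lt_le_trans far_y (greedy_separation yP le_jc p1S p2S ne12).
have near_Q : {in y |: S, forall p, mind d p Q <= cost d P Q}.
  move=> p pA; apply: mind_le_cost; move: pA; rewrite in_setU1 => /predU1P [-> //|].
  exact: (subsetP (greedy_prefix_subset j)).
have := card_separated_le Q_ne near_Q sep.
by rewrite cardsU1 y_notin_S card_prefix_set // -/j; lia.
Qed.

End Greedy.

End Metric.

Lemma extend_to_budget t (a b0 : 'I_t -> nat) b :
  (\sum_(i < t) b0 i)%N = b -> (\sum_(i < t) a i <= b)%N ->
  exists2 b', (\sum_(i < t) b' i)%N = b & forall i, (a i <= b' i)%N.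
Proof.
case: t a b0 => [|t] a b0 <-; first by rewrite !big_ord0; exists a; rewrite ?big_ord0.
set slack := (\sum_(i < t.+1) b0 i - \sum_(i < t.+1) a i)%N => le_ab.
exists (fun i => a i + (i == ord0) * slack)%N => [|i]; last exact: leq_addr.
rewrite big_split /=.
have -> : (\sum_(i < t.+1) (i == ord0) * slack = slack)%N.
  by rewrite (bigD1 ord0) //= mul1n big1 ?addn0 // => i /negbTE ->.
exact: subnKC.
Qed.

Lemma greedy_prefixes_feasible (R : realType) (T : finType) (d : T -> T -> R)
  t (P : 'I_t -> {set T}) b (c : 'I_t -> seq T) (bhat : 'I_t -> nat) :
  (forall i, P i != set0) -> (forall i, greedy_run d (P i) b.+1 (c i)) ->
  (\sum_(i < t) bhat i)%N = b ->
  bestreps_feasible P b (fun i => prefix_set (c i) (bhat i).+1).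
Proof.
move=> P_ne greedy_c sum_bhat.
have card_R i : #|prefix_set (c i) (bhat i).+1| = minn (bhat i).+1 (minn b.+1 #|P i|).
  by have [size_c uniq_c _ _] := greedy_c i; rewrite card_prefix_set // size_c.
split=> [i|i|].
- exact: greedy_prefix_subset (greedy_c i) _.
- by rewrite card_R; have := P_ne i; rewrite -card_gt0; lia.
- by rewrite -sum_bhat; apply: leq_sum => i _; rewrite card_R; lia.
Qed.

Theorem theorem3 (R : realType) (T : finType) (d : T -> T -> R)
  (t : nat) (P : 'I_t -> {set T}) (b : nat)
  (c : 'I_t -> seq T) (bhat : 'I_t -> nat) :
  is_metric d ->
  (* P_1, ..., P_t is a partition of X into nonempty parts *)
  (forall i, P i != set0) ->
  (forall i j, i != j -> [disjoint P i & P j]) ->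
  (forall x : T, exists i, x \in P i) ->
  (* c i is a run of greedy k-center on P_i with k = b + 1 *)
  (forall i, greedy_run d (P i) b.+1 (c i)) ->
  (* bhat is an optimal allocation *)
  (\sum_(i < t) bhat i)%N = b ->
  (forall b' : 'I_t -> nat, (\sum_(i < t) b' i)%N = b ->
     \sum_(i < t) cost d (P i) (prefix_set (c i) (bhat i).+1)
       <= \sum_(i < t) cost d (P i) (prefix_set (c i) (b' i).+1)) ->
  bestreps_feasible P b (fun i => prefix_set (c i) (bhat i).+1) /\
  (forall Q : 'I_t -> {set T}, bestreps_feasible P b Q ->
     bestreps_obj d P (fun i => prefix_set (c i) (bhat i).+1)
       <= 2 * bestreps_obj d P Q).
Proof.
move=> metric_d P_ne _ _ greedy_c sum_bhat opt_bhat.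
split=> [|Q [QP Q_gt0 Q_budget]]; first exact: greedy_prefixes_feasible.
have [b' sum_b' Q_le_b'] := extend_to_budget sum_bhat Q_budget.
apply: le_trans (opt_bhat b' sum_b') _.
rewrite /bestreps_obj mulr_sumr; apply: ler_sum => i _.
have b'_le_b : (b' i <= b)%N by rewrite -sum_b' (bigD1 i) //= leq_addr.
have Q_le_b'1 : (#|Q i| <= (b' i).+1)%N by have := Q_le_b' i; lia.
have Q_range : (0 < #|Q i| <= b.+1)%N by rewrite Q_gt0; lia.
exact (greedy_cost_le2 metric_d (greedy_c i) (QP i) Q_range Q_le_b'1).
Qed.
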